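(* Suppose the collective choice problem $\mathcal C$ satisfies Generic Finite Alternatives. For every $x^0\in X$ and integers $T'>T\ge 1$, \[U_{T'}(x^0)\ge U_T(x^0)\ge U_\infty(x^0).\] Moreover, exactly one of the following holds: (a) there exists $x^0\in X$ such that $U_T(x^0)>U_1(x^0)>U_\infty(x^0)$ for all $T\ge 2$; (b) for all $x^0\in X$ and all $T\ge 2$, $U_T(x^0)=U_1(x^0)=U_\infty(x^0)$.
   Context: Voters $N=\{1,\dots,n\}$ ($n$ odd) and a non-voting agenda setter $A$ choose from a finite policy space $X$; all players have strict (antisymmetric) complete transitive preferences $\succsim_i$ with utilities $u_i$ (Generic Finite Alternatives). $x\succ_M y$: a strict majority of voters strictly prefer $x$ to $y$. $M(x)=\{y: y\succ_M x\text{ or } y=x\}$; $\{\phi(x)\}=\arg\max_{y\in M(x)}u_A(y)$. In the amendment procedure with $T$ rounds (each round the agenda setter proposes a policy voted against the current default by simple majority; passed proposals become the default; the final default is implemented; equilibrium = subgame perfect with as-if-pivotal voting) the implemented policy is unique, equal to $\phi^T(x^0)$, and $U_T(x^0)=u_A(\phi^T(x^0))$ is the agenda setter's equilibrium payoff. A set $Y\subseteq X$ is stable if no distinct $x,y\in Y$ satisfy $y\succ_M x$ and $y\succ_A x$, and every $x\notin Y$ has some $y\in Y$ with $y\succ_M x$ and $y\succ_A x$; in this setting there is a unique stable set $V$. Let $\{\psi(x;V)\}=\arg\max_{y\in M(x)\cap V}u_A(y)$ and $U_\infty(x^0)=u_A(\psi(x^0;V))$; this is the agenda setter's payoff in the infinite-horizon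 game (no deadline; bargaining ends when the agenda setter proposes the current default or a proposal is rejected; the policy at termination is implemented; non-termination is worst for all; solution concept: pure-strategy Markov perfect equilibrium with as-if-pivotal voting). *)

From HB Require Import structures.
From mathcomp Require Import all_boot all_order all_algebra.
Set Implicit Arguments. Unset Strict Implicit. Unset Printing Implicit Defensive.
Import Order.TTheory GRing.Theory Num.Theory.
Local Open Scope ring_scope.

Section Amendment.
Variables (R : realDomainType) (X : finType) (n : nat).
Variables (u : 'I_n -> X -> R) (uA : X -> R).

Definition majpref (y x : X) : bool :=
  (n < (#|[set i : 'I_n | (u i x < u i y)%R]|).*2)%N.

Definition Mset (x : X) : {set X} := [set y | majpref y x || (y == x)].

Definition phi (x : X) : X := [arg max_(y > x in Mset x) uA y]%O.

Definition U (T : nat) (x0 : X) : R := uA (iter T phi x0).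

Definition dominates (y x : X) : bool := majpref y x && (uA x < uA y).

Definition stable (V : {set X}) : Prop :=
  (forall x y, x \in V -> y \in V -> x != y -> ~~ dominates y x) /\
  (forall x, x \notin V -> exists2 y, y \in V & dominates y x).

(* psi(x;V) = argmax_{y in M(x) \cap V} u_A(y) (the set is nonempty when V
   is stable; the fallback x is never used then) *)
Definition psi (V : {set X}) (x : X) : X :=
  match [pick y in Mset x :&: V] with
  | Some y0 => [arg max_(y > y0 in Mset x :&: V) uA y]%O
  | None => x
  end.

Definition Uinf (V : {set X}) (x0 : X) : R := uA (psi V x0).

End Amendment.

(* Generic Finite Alternatives: n odd, strict (injective-utility) preferences *)
Definition GFA (R : realDomainType) (X : finType) (n : nat)
  (u : 'I_n -> X -> R) (uA : X -> R) : Prop :=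
  odd n /\ (forall i, injective (u i)) /\ injective uA.

From Pilot Require Import Defs.
From HB Require Import structures.
From mathcomp Require Import all_boot all_order all_algebra.
Import Order.TTheory GRing.Theory Num.Theory.
Set Implicit Arguments. Unset Strict Implicit. Unset Printing Implicit Defensive.
Local Open Scope ring_scope.

(* Since x is in M(x), the setter's payoff never decreases along the orbit of
   phi, so U_T is nondecreasing in T; psi(x;V) maximises over the smaller set
   M(x) \cap V, so U_oo <= U_1.  A fixed point of phi is undominated, hence in
   V by external stability; conversely, if phi maps every x into V then
   internal stability forces phi to fix V pointwise, so phi^T = phi and
   psi = phi, giving (b).  Otherwise phi(x0) is outside V for some x0; then
   phi(x0) is not fixed, which makes U_2(x0) > U_1(x0), and psi(x0;V), lying
   in V, is strictly worse than phi(x0), giving (a). *)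

Section AgendaSetterPayoffs.
Variables (R : realDomainType) (X : finType) (n : nat).
Variables (u : 'I_n -> X -> R) (uA : X -> R).
Hypothesis uA_inj : injective uA.

Local Notation Mset := (Defs.Mset u).
Local Notation phi := (Defs.phi u uA).
Local Notation dominates := (Defs.dominates u uA).

Lemma Mset_self x : x \in Mset x.
Proof. by rewrite inE eqxx orbT. Qed.

Lemma uA_lt_of_le_neq x y : uA x <= uA y -> x != y -> uA x < uA y.
Proof.
by move=> le_xy neq_xy; rewrite lt_neqAle le_xy andbT (inj_eq uA_inj).
Qed.

Lemma phiP x :
  phi x \in Mset x /\ forall y, y \in Mset x -> uA y <= uA (phi x).
Proof. by rewrite /Defs.phi; case: arg_maxP => [|y]; [exact: Mset_self|]. Qed.

Lemma uA_le_phi x : uA x <= uA (phi x).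
Proof. by apply: (phiP x).2; exact: Mset_self. Qed.

Lemma uA_lt_phi x : phi x != x -> uA x < uA (phi x).
Proof. by move=> neq_phi; apply: uA_lt_of_le_neq; rewrite ?uA_le_phi // eq_sym. Qed.

Lemma phi_dominates x : phi x != x -> dominates (phi x) x.
Proof.
move=> neq_phi; rewrite /Defs.dominates uA_lt_phi // andbT.
by case: (phiP x) => /[!inE] /orP[// | /eqP phix]; rewrite phix eqxx in neq_phi.
Qed.

Lemma dominated_phi_neq w x : dominates w x -> phi x != x.
Proof.
case/andP=> maj_wx lt_xw; apply/eqP => phix.
by have := (phiP x).2 w; rewrite inE maj_wx phix => /(_ isT); rewrite leNgt lt_xw.
Qed.

Lemma U_mono x S T : (S <= T)%N -> U u uA S x <= U u uA T x.
Proof.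
move/subnK <-; elim: (T - S)%N => [// | k IH].
by apply: le_trans IH _; rewrite /U addSn iterS; exact: uA_le_phi.
Qed.

Variable V : {set X}.
Hypothesis V_stable : stable u uA V.

Local Notation psi := (Defs.psi u uA V).

Lemma mem_fixed_phi x : phi x = x -> x \in V.
Proof.
move=> phix; apply: contraT => /(V_stable.2 x) [w _ /dominated_phi_neq].
by rewrite phix eqxx.
Qed.

Lemma phi_fixed_of_mem x : x \in V -> phi x \in V -> phi x = x.
Proof.
move=> xV phixV; apply: contraTeq isT => neq_phi.
by have := V_stable.1 x _ xV phixV; rewrite eq_sym => /(_ neq_phi); rewrite phi_dominates.
Qed.

Lemma Mset_stable_neq0 x : Mset x :&: V != set0.
Proof.
apply/set0Pn; case: (boolP (x \in V)) => [xV | /(V_stable.2 x) [w wV /andP[maj_wx _]]].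
  by exists x; rewrite inE Mset_self.
by exists w; rewrite !inE maj_wx wV.
Qed.

Lemma psiP x : psi x \in Mset x :&: V /\
  forall y, y \in Mset x :&: V -> uA y <= uA (psi x).
Proof.
rewrite /Defs.psi; case: pickP => [y0 y0M | noM].
  by case: arg_maxP.
by case/set0Pn: (Mset_stable_neq0 x) => y; rewrite noM.
Qed.

Lemma uA_psi_le_phi x : uA (psi x) <= uA (phi x).
Proof. by apply: (phiP x).2; case: (psiP x) => /setIP[]. Qed.

Lemma psi_phi x : phi x \in V -> psi x = phi x.
Proof.
move=> phixV; apply: uA_inj; apply/eqP; rewrite eq_le uA_psi_le_phi /=.
by apply: (psiP x).2; rewrite inE phixV andbT; case: (phiP x).
Qed.

Lemma uA_psi_lt_phi x : phi x \notin V -> uA (psi x) < uA (phi x).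
Proof.
move=> phixV; apply: uA_lt_of_le_neq; first exact: uA_psi_le_phi.
by apply: contraNneq phixV => <-; case: (psiP x) => /setIP[].
Qed.

Lemma U1_lt_U x0 T : phi x0 \notin V -> (2 <= T)%N ->
  U u uA 1 x0 < U u uA T x0.
Proof.
move=> phix0V le2T; apply: (lt_le_trans _ (U_mono x0 le2T)).
by apply: uA_lt_phi; apply: contraNneq phix0V => /mem_fixed_phi.
Qed.

Lemma iter_phi_into_stable x0 T : (forall x, phi x \in V) ->
  iter T.+1 phi x0 = phi x0.
Proof.
move=> phiV; elim: T => [// | T IH].
by rewrite iterS IH phi_fixed_of_mem.
Qed.

End AgendaSetterPayoffs.

Theorem theorem8 (R : realDomainType) (X : finType) (n : nat)
  (u : 'I_n -> X -> R) (uA : X -> R) (V : {set X}) :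
  GFA u uA -> stable u uA V ->
  (forall (x0 : X) (T T' : nat), (1 <= T)%N -> (T < T')%N ->
     U u uA T x0 <= U u uA T' x0 /\ Uinf u uA V x0 <= U u uA T x0) /\
  (let A := exists x0 : X, forall T : nat, (2 <= T)%N ->
              U u uA 1 x0 < U u uA T x0 /\ Uinf u uA V x0 < U u uA 1 x0 in
   let B := forall (x0 : X) (T : nat), (2 <= T)%N ->
              U u uA T x0 = U u uA 1 x0 /\ U u uA 1 x0 = Uinf u uA V x0 in
   (A /\ ~ B) \/ (~ A /\ B)).
Proof.
case=> _ [_ uA_inj] V_stable; split=> [x0 T T' le1T ltTT' | A B].
  split; first exact: (U_mono u uA x0 (ltnW ltTT')).
  exact: (le_trans (uA_psi_le_phi V_stable x0) (U_mono u uA x0 le1T)).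
have not_AB : ~ (A /\ B).
  case=> [[x0 HA] HB]; have [lt12 _] := HA 2%N isT; have [eq21 _] := HB x0 2%N isT.
  by move: lt12; rewrite eq21 ltxx.
have [x0 phix0V | phiV] := pickP (fun x => phi u uA x \notin V).
  have HA : A.
    exists x0 => T le2T; split; first exact: (U1_lt_U uA_inj V_stable phix0V le2T).
    exact: (uA_psi_lt_phi uA_inj V_stable phix0V).
  by left; split=> // HB; apply: not_AB.
have {}phiV x : phi u uA x \in V by apply: negbFE; exact: phiV.
have HB : B.
  move=> x0 [|T] // _.
  by rewrite /U /Uinf (iter_phi_into_stable uA_inj V_stable) // (psi_phi uA_inj V_stable).
by right; split=> // HA; apply: not_AB.
Qed.
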